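(* Let $\theta>0$ and $h>0$, and let $\mu=\frac12(\delta_{-1}+\delta_{+1})$ on $\{-1,+1\}$. For a function $q:[0,2\pi)\times\{-1,+1\}\to\mathbb{R}$ define $r_q\ge 0$ and $\Psi_q\in[0,2\pi)$ by \[ r_q e^{i\Psi_q}=\int_{\{-1,+1\}}\int_0^{2\pi} e^{ix}\,q(x,\eta)\,dx\,\mu(d\eta), \] and the operator $L_q$ acting on $f:[0,2\pi)\times\{-1,+1\}\to\mathbb{R}$ by \[ L_q f(x,\eta)=\frac12\frac{\partial^2 f}{\partial x^2}(x,\eta)-\frac{\partial}{\partial x}\Big\{\big[\theta r_q\sin(\Psi_q-x)-h\eta\sin x\big]f(x,\eta)\Big\}. \] Let $q:[0,2\pi)\times\{-1,+1\}\to\mathbb{R}$ be such that $q(x,\cdot)$ is measurable and $q(\cdot,\eta)$ is a probability density on $[0,2\pi)$ (the circle, with periodic boundary conditions). Then $q$ is a stationary solution of the McKean–Vlasov equation $\partial_t q_t=L_{q_t}q_t$, i.e. $L_q q\equiv 0$, if and only if it is of the form \[ q(x,\eta)=[Z(\eta)]^{-1}\exp\{2\theta r\cos(\Psi-x)+2h\eta\cos x\}, \] where $Z(\eta)$ is a normalizing factor and $(r,\Psi)$ satisfies the self-consistency relation \[ r e^{i\Psi}=\int_{\{-1,+1\}}\int_0^{2\pi}e^{ix}\,q(x,\eta)\,dx\,\mu(d\eta). \]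
   Context: The torus $[0,2\pi)$ is identified with the circle; functions on it are $2\pi$-periodic. $\mu$ is the law of the dichotomic random field $\eta$, uniform on $\{-1,+1\}$; $\theta>0$ is the coupling strength and $h>0$ the field intensity. *)

From Stdlib Require Import Reals.
From Coquelicot Require Import Coquelicot.
Open Scope R_scope.

(* The spin eta ranges over {-1,+1}; a function on [0,2pi) x {-1,+1}
   is represented as q : R -> R -> R, 2pi-periodic in its first argument,
   only the values at eta = -1, +1 being relevant. *)
Definition spin (eta : R) : Prop := eta = 1 \/ eta = -1.

Definition mu_int (g : R -> R) : R := (g 1 + g (-1)) / 2.

(* Real and imaginary parts of  \int\int e^{ix} q(x,eta) dx mu(deta). *)
Definition ord_re (q : R -> R -> R) : R :=
  mu_int (fun eta => RInt (fun x => cos x * q x eta) 0 (2 * PI)).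
Definition ord_im (q : R -> R -> R) : R :=
  mu_int (fun eta => RInt (fun x => sin x * q x eta) 0 (2 * PI)).

Definition is_polar (r Psi a b : R) : Prop :=
  0 <= r /\ 0 <= Psi < 2 * PI /\ r * cos Psi = a /\ r * sin Psi = b.

Definition L_op (theta h rq Psiq : R) (f : R -> R -> R) (x eta : R) : R :=
  / 2 * Derive_n (fun y => f y eta) 2 x
  - Derive (fun y => (theta * rq * sin (Psiq - y) - h * eta * sin y) * f y eta) x.

Definition gibbs (theta h r Psi x eta : R) : R :=
  exp (2 * theta * r * cos (Psi - x) + 2 * h * eta * cos x).

Definition Zn (theta h r Psi eta : R) : R :=
  RInt (fun x => gibbs theta h r Psi x eta) 0 (2 * PI).

Definition circle_density (q : R -> R -> R) : Prop :=
  forall eta, spin eta ->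
    (forall x, q (x + 2 * PI) eta = q x eta) /\
    (forall x, 0 <= q x eta) /\
    ex_RInt (fun x => q x eta) 0 (2 * PI) /\
    RInt (fun x => q x eta) 0 (2 * PI) = 1.

Definition twice_diff (q : R -> R -> R) : Prop :=
  forall eta, spin eta -> forall x,
    ex_derive (fun y => q y eta) x /\ ex_derive (Derive (fun y => q y eta)) x.

From Stdlib Require Import Reals Lra.
From Coquelicot Require Import Coquelicot.
Open Scope R_scope.

(* For each spin the stationary equation is the one-dimensional Fokker-Planck
   equation (1/2 f' - b f)' = 0 with drift b = G'/2 for the periodic potential
   G(x) = 2 theta r cos(Psi - x) + 2 h eta cos x.  So the flux F = 1/2 f' - b f
   is a constant C, and (f e^{-G})' = 2 C e^{-G}.  Integrating over a period,
   periodicity of f and G gives 2 C \int e^{-G} = 0, hence C = 0 and f is a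
   multiple of e^G; normalisation fixes the multiple as 1/Z.  Conversely a Gibbs
   profile has zero flux.  The drift only sees r e^{i Psi}, which the
   self-consistency relation identifies with r_q e^{i Psi_q}. *)

Lemma is_derive_0_const (F : R -> R) :
  (forall x, is_derive F x 0) -> forall x, F x = F 0.
Proof.
  intros HF x.
  assert (H := is_RInt_derive F (fun _ => 0) 0 x
                 (fun y _ => HF y) (fun y _ => continuous_const 0 y)).
  apply is_RInt_unique in H.
  rewrite RInt_const in H.
  unfold scal, minus, plus, opp, mult in H; simpl in H; unfold mult in H; simpl in H.
  lra.
Qed.

Section StationaryFokkerPlanck.

Variables (f b G : R -> R).
Hypothesis f_derivable : forall y, ex_derive f y.
Hypothesis f'_derivable : forall y, ex_derive (Derive f) y.
Hypothesis b_derivable : forall y, ex_derive b y.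
Hypothesis G_derive : forall y, is_derive G y (2 * b y).

Definition flux (y : R) : R := / 2 * Derive f y - b y * f y.

Lemma is_derive_flux y :
  is_derive flux y (/ 2 * Derive (Derive f) y - Derive (fun z => b z * f z) y).
Proof.
  apply (is_derive_minus (fun z => / 2 * Derive f z) (fun z => b z * f z)).
  - apply is_derive_scal, Derive_correct, f'_derivable.
  - apply Derive_correct, ex_derive_mult; auto.
Qed.

Lemma is_derive_exp_opp_G y :
  is_derive (fun z => exp (- G z)) y (- (2 * b y) * exp (- G y)).
Proof.
  apply (is_derive_comp exp (fun z => - G z)).
  - apply is_derive_exp.
  - exact (@is_derive_opp R_AbsRing R_NormedModule G y _ (G_derive y)).
Qed.

Lemma continuous_exp_opp_G y : continuous (fun z => exp (- G z)) y.
Proof.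
  apply (@ex_derive_continuous R_AbsRing R_NormedModule).
  eexists; apply is_derive_exp_opp_G.
Qed.

Lemma is_derive_mul_exp_opp_G y :
  is_derive (fun z => f z * exp (- G z)) y (2 * flux y * exp (- G y)).
Proof.
  replace (2 * flux y * exp (- G y))
    with (Derive f y * exp (- G y) + f y * (- (2 * b y) * exp (- G y)))
    by (unfold flux; field).
  apply (is_derive_mult f (fun z => exp (- G z))).
  - apply Derive_correct, f_derivable.
  - apply is_derive_exp_opp_G.
  - intros; apply Rmult_comm.
Qed.

Hypothesis stationary :
  forall x, / 2 * Derive (Derive f) x - Derive (fun y => b y * f y) x = 0.

Lemma flux_const x : flux x = flux 0.
Proof.
  apply is_derive_0_const; intros y.
  rewrite <- (stationary y); apply is_derive_flux.
Qed.

Variable T : R.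
Hypothesis T_pos : 0 < T.
Hypothesis f_periodic : f T = f 0.
Hypothesis G_periodic : G T = G 0.

Lemma flux_periodic_eq0 : flux 0 = 0.
Proof.
  set (C := flux 0).
  assert (HD : forall y, is_derive (fun z => f z * exp (- G z)) y (2 * C * exp (- G y))).
  { intros y; unfold C; rewrite <- (flux_const y); apply is_derive_mul_exp_opp_G. }
  assert (Hcont : forall y, continuous (fun z => 2 * C * exp (- G z)) y).
  { intros y; apply (@ex_derive_continuous R_AbsRing R_NormedModule).
    eexists; apply (is_derive_scal (fun z => exp (- G z))), is_derive_exp_opp_G. }
  assert (Hint := is_RInt_derive _ _ 0 T (fun y _ => HD y) (fun y _ => Hcont y)).
  apply is_RInt_unique in Hint.
  assert (Hscal : RInt (fun z => 2 * C * exp (- G z)) 0 T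
                  = 2 * C * RInt (fun z => exp (- G z)) 0 T).
  { apply (RInt_scal (fun z => exp (- G z))).
    apply ex_RInt_continuous; intros y _; apply continuous_exp_opp_G. }
  rewrite Hscal in Hint.
  assert (Hpos : 0 < RInt (fun z => exp (- G z)) 0 T)
    by (apply RInt_gt_0; [exact T_pos | intros; apply exp_pos
                         | intros; apply continuous_exp_opp_G]).
  rewrite f_periodic, G_periodic in Hint.
  unfold scal, minus, plus, opp, mult in Hint; simpl in Hint; unfold mult in Hint.
  nra.
Qed.

Theorem stationary_periodic_gibbs x : f x = f 0 * exp (- G 0) * exp (G x).
Proof.
  assert (Hconst : forall y, is_derive (fun z => f z * exp (- G z)) y 0).
  { intros y; replace 0 with (2 * flux y * exp (- G y))
      by (rewrite flux_const, flux_periodic_eq0; ring).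
    apply is_derive_mul_exp_opp_G. }
  rewrite <- (is_derive_0_const _ Hconst x), Rmult_assoc, <- exp_plus.
  replace (- G x + G x) with 0 by ring.
  rewrite exp_0; ring.
Qed.

End StationaryFokkerPlanck.

Lemma stationary_of_zero_flux (f b : R -> R) :
  (forall y, Derive f y = 2 * (b y * f y)) ->
  forall x, / 2 * Derive (Derive f) x - Derive (fun y => b y * f y) x = 0.
Proof.
  intros Hflux x.
  rewrite (Derive_ext _ _ x Hflux), Derive_scal; field.
Qed.

Lemma normalized_multiple (f g : R -> R) (K a c : R) :
  (forall x, f x = K * g x) -> ex_RInt g a c -> RInt f a c = 1 ->
  forall x, f x = / RInt g a c * g x.
Proof.
  intros Hfg Hg Hnorm x.
  assert (HKZ : K * RInt g a c = 1).
  { rewrite <- Hnorm, (RInt_ext f (fun y => K * g y)) by (intros; apply Hfg).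
    symmetry; exact (RInt_scal g a c K Hg). }
  assert (RInt g a c <> 0) by (intro E; rewrite E in HKZ; lra).
  rewrite Hfg; f_equal.
  replace K with (K * RInt g a c * / RInt g a c) by (field; auto).
  rewrite HKZ; ring.
Qed.

Definition drift (theta h r Psi eta y : R) : R :=
  theta * r * sin (Psi - y) - h * eta * sin y.

Definition potential (theta h r Psi eta y : R) : R :=
  2 * theta * r * cos (Psi - y) + 2 * h * eta * cos y.

Lemma ex_derive_drift theta h r Psi eta y : ex_derive (drift theta h r Psi eta) y.
Proof. unfold drift; auto_derive; auto. Qed.

Lemma is_derive_potential theta h r Psi eta y :
  is_derive (potential theta h r Psi eta) y (2 * drift theta h r Psi eta y).
Proof. unfold potential, drift; auto_derive; auto; unfold Rminus; ring. Qed.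

Lemma potential_2PI theta h r Psi eta :
  potential theta h r Psi eta (2 * PI) = potential theta h r Psi eta 0.
Proof.
  unfold potential; rewrite !cos_minus, cos_2PI, sin_2PI, cos_0, sin_0; ring.
Qed.

Lemma is_derive_gibbs theta h r Psi eta y :
  is_derive (fun x => gibbs theta h r Psi x eta) y
    (2 * drift theta h r Psi eta y * gibbs theta h r Psi y eta).
Proof.
  apply (is_derive_comp exp (potential theta h r Psi eta)).
  - apply is_derive_exp.
  - apply is_derive_potential.
Qed.

Lemma ex_RInt_gibbs theta h r Psi eta a c :
  ex_RInt (fun x => gibbs theta h r Psi x eta) a c.
Proof.
  apply (ex_RInt_continuous (V := R_CompleteNormedModule)); intros z _.
  apply (@ex_derive_continuous R_AbsRing R_NormedModule).
  eexists; apply is_derive_gibbs.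
Qed.

Lemma drift_polar theta h r Psi r' Psi' eta y :
  r * cos Psi = r' * cos Psi' -> r * sin Psi = r' * sin Psi' ->
  drift theta h r Psi eta y = drift theta h r' Psi' eta y.
Proof.
  intros Hc Hs; unfold drift; rewrite !sin_minus.
  replace (theta * r * (sin Psi * cos y - cos Psi * sin y))
    with (theta * ((r * sin Psi) * cos y - (r * cos Psi) * sin y)) by ring.
  rewrite Hc, Hs; ring.
Qed.

Theorem proposition1 (theta h : R) (q : R -> R -> R) (rq Psiq : R) :
  0 < theta -> 0 < h ->
  circle_density q -> twice_diff q ->
  is_polar rq Psiq (ord_re q) (ord_im q) ->
  ((forall eta, spin eta -> forall x, L_op theta h rq Psiq q x eta = 0) <->
   exists r Psi : R,
     (forall eta, spin eta -> forall x,
        q x eta = / Zn theta h r Psi eta * gibbs theta h r Psi x eta) /\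
     r * cos Psi = ord_re q /\ r * sin Psi = ord_im q).
Proof.
  intros _ _ Hden Htd [_ [_ [Hre Him]]]; split.
  - intros HL; exists rq, Psiq; repeat split; auto.
    intros eta Heta.
    destruct (Hden eta Heta) as [Hper [_ [_ Hnorm]]].
    assert (Hgibbs := stationary_periodic_gibbs (fun y => q y eta)
      (drift theta h rq Psiq eta) (potential theta h rq Psiq eta)
      (fun y => proj1 (Htd eta Heta y)) (fun y => proj2 (Htd eta Heta y))
      (ex_derive_drift theta h rq Psiq eta) (is_derive_potential theta h rq Psiq eta)
      (HL eta Heta) (2 * PI) ltac:(pose proof PI_RGT_0; lra)
      ltac:(cbv beta; rewrite <- (Hper 0), Rplus_0_l; reflexivity)
      (potential_2PI theta h rq Psiq eta)).
    exact (normalized_multiple _ _ _ _ _ Hgibbs (ex_RInt_gibbs _ _ _ _ _ _ _) Hnorm).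
  - intros [r [Psi [Hq [Hc Hs]]]] eta Heta x.
    apply (stationary_of_zero_flux _ (drift theta h rq Psiq eta)); intros y.
    rewrite (Derive_ext _ _ y (Hq eta Heta)), (Hq eta Heta y).
    rewrite (drift_polar theta h rq Psiq r Psi) by lra.
    apply is_derive_unique.
    replace (2 * (drift theta h r Psi eta y
                  * (/ Zn theta h r Psi eta * gibbs theta h r Psi y eta)))
      with (/ Zn theta h r Psi eta
            * (2 * drift theta h r Psi eta y * gibbs theta h r Psi y eta)) by ring.
    apply is_derive_scal, is_derive_gibbs.
Qed.
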